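(* For $n\ge 2$, the star $K_{1,n}$ satisfies $\nu^*(K_{1,n})=\frac{5n^2+n}{2}$.
   Context: For a finite simple graph $G=(V,E)$ with $\ell=|V|+|E|$, a construction sequence (c-sequence) is a bijection $x:\{1,\dots,\ell\}\to V\sqcup E$ such that every edge $e=uw$ satisfies $x^{-1}(e)>\max\{x^{-1}(u),x^{-1}(w)\}$. The cost of $x$ is $\nu(x)=\sum_{e=uw\in E}\big(2x^{-1}(e)-x^{-1}(u)-x^{-1}(w)\big)$, and $\nu^*(G)$ is the maximum of $\nu(x)$ over all c-sequences for $G$. $K_{1,n}$ is the star with one hub vertex adjacent to $n$ leaves. *)

From mathcomp Require Import all_boot all_order all_algebra.
Set Implicit Arguments. Unset Strict Implicit. Unset Printing Implicit Defensive.
Import GRing.Theory Num.Theory.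

(* A finite simple graph is given by a vertex finType T and a symmetric,
   irreflexive adjacency relation adj.  Elements of V ⊔ E are encoded in T + {set T}:
   inl v for vertices, inr E for edges. *)

Definition edge_set (T : finType) (adj : rel T) : {set {set T}} :=
  [set E : {set T} | [exists u, exists w, adj u w && (E == [set u; w])]].

Definition graph_elems (T : finType) (adj : rel T) : seq (T + {set T}) :=
  map inl (enum T) ++ map inr (enum (edge_set adj)).

(* The position of a in s is x^{-1}(a). *)
Definition pos (T : finType) (s : seq (T + {set T})) (a : T + {set T}) : nat :=
  (index a s).+1.

Definition is_cseq (T : finType) (adj : rel T) (s : seq (T + {set T})) : Prop :=
  perm_eq s (graph_elems adj) /\
  forall E, E \in edge_set adj -> forall u, u \in E ->
    pos s (inl u) < pos s (inr E).

Definition cost (T : finType) (adj : rel T) (s : seq (T + {set T})) : int :=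
  \sum_(E in edge_set adj) \sum_(u in E)
     ((pos s (inr E))%:Z - (pos s (inl u))%:Z).

Definition max_cost_is (T : finType) (adj : rel T) (m : int) : Prop :=
  (exists s, is_cseq adj s /\ cost adj s = m) /\
  (forall s, is_cseq adj s -> (cost adj s <= m)%R).

Definition star_adj (n : nat) : rel 'I_n.+1 :=
  fun i j => (i != j) && ((i == ord0) || (j == ord0)).

From mathcomp Require Import all_boot all_order all_algebra.
From mathcomp Require Import zify ring.
Import GRing.Theory Num.Theory.

Set Implicit Arguments. Unset Strict Implicit. Unset Printing Implicit Defensive.

(* Every edge of K_{1,n} contains the hub, so the cost of x is
   2 S_E - n x^-1(hub) - S_L, where S_E and S_L are the sums of the positions of
   the edges and of the leaves.  All 2n+1 positions are used exactly once, so
   S_L = (2n+1)(n+1) - x^-1(hub) - S_E and the cost is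
   3 S_E - (n-1) x^-1(hub) - (2n+1)(n+1).  It is therefore at most the value
   obtained with the edges in the last n positions and the hub first, which is
   (5n^2+n)/2; listing all vertices, hub first, before all edges attains it. *)

Lemma double_sum_succ m : (\sum_(i < m) i.+1).*2 = m * m.+1.
Proof.
elim: m => [|m IHm]; first by rewrite big_ord0.
by rewrite big_ord_recr /= doubleD IHm; lia.
Qed.

Lemma sum_index_uniq (U : eqType) (s : seq U) (F : nat -> nat) :
  uniq s -> \sum_(x <- s) F (index x s) = \sum_(i < size s) F i.
Proof.
case: s => [|x0 s] us; first by rewrite big_nil big_ord0.
rewrite (big_nth x0) big_mkord; apply: eq_bigr => i _.
by rewrite index_uniq.
Qed.

Lemma sum_uniq_lt_bound N (t : seq nat) : uniq t -> {in t, forall x, x < N} ->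
  \sum_(x <- t) x + \sum_(i < size t) i.+1 <= size t * N.
Proof.
elim: N t => [|N IHN] t ut ltN.
  case: t ut ltN => [|x t] _ ltN; first by rewrite big_nil big_ord0.
  by have := ltN x (mem_head x t).
have [Nt | Nnt] := boolP (N \in t).
  have pt := perm_to_rem Nt.
  rewrite (perm_big _ pt) big_cons (perm_size pt) /= big_ord_recr /=.
  have ltNr : {in rem N t, forall x, x < N}.
    by move=> x; rewrite mem_rem_uniq // inE => /andP [xN /ltN]; lia.
  have := IHN _ (rem_uniq N ut) ltNr.
  (* [big_ord_recr] leaves a [widen_ord] in the summand: [set] makes both sums
     one atom for [nia]. *)
  set b := \sum_(i < _) _.
  nia.
have ltN' : {in t, forall x, x < N}.
  move=> x xt; have xN : x != N by apply: contraNneq Nnt => <-.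
  by have := ltN x xt; lia.
have := IHN t ut ltN'; nia.
Qed.

Section Positions.
Variables (T : finType) (adj : rel T).
Implicit Type s : seq (T + {set T}).

Lemma pos_le_size s x : x \in s -> pos s x <= size s.
Proof. by rewrite /pos index_mem. Qed.

Lemma pos_inj s : {in s &, injective (pos s)}.
Proof. by move=> x y xs ys [] eq_xy; rewrite -(nth_index x xs) -(nth_index x ys) eq_xy. Qed.

Lemma sum_pos_uniq s : uniq s -> \sum_(x <- s) pos s x = \sum_(i < size s) i.+1.
Proof. exact: (sum_index_uniq succn). Qed.

Lemma graph_elems_uniq : uniq (graph_elems adj).
Proof.
rewrite /graph_elems cat_uniq !map_inj_uniq -?enumT ?enum_uniq ?andbT //=;
  [| exact: inr_inj | exact: inl_inj].
by apply/hasPn => _ /mapP [E _ ->]; apply/mapP => -[].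
Qed.

Lemma pos_graph_elems_inl v : pos (graph_elems adj) (inl v) = (index v (enum T)).+1.
Proof.
by rewrite /pos /graph_elems index_cat map_f ?mem_enum // index_map //; apply: inl_inj.
Qed.

Lemma graph_elems_cseq : is_cseq adj (graph_elems adj).
Proof.
split=> // E _ u _; rewrite pos_graph_elems_inl /pos /graph_elems index_cat.
have -> : (inr E \in [seq inl v | v <- enum T]) = false by apply/negbTE/mapP => -[].
by rewrite size_map ltnS (leq_trans _ (leq_addr _ _)) // index_mem mem_enum.
Qed.

End Positions.

Section Star.
Variable n : nat.
Local Notation star := (@star_adj n).

Definition star_edge (k : 'I_n) : {set 'I_n.+1} := [set ord0; lift ord0 k].

Lemma star_edge_inj : injective star_edge.
Proof.
move=> k1 k2 /setP /(_ (lift ord0 k1)).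
rewrite !inE eqxx orbT eq_sym (negbTE (neq_lift _ _)) /=.
by move/esym/eqP/lift_inj.
Qed.

Lemma edge_set_star : edge_set star = star_edge @: 'I_n.
Proof.
apply/setP => E; rewrite inE; apply/existsP/imsetP.
  case=> u /existsP [w /andP [/andP [neq_uw hub_uw] /eqP ->]].
  case/orP: hub_uw => /eqP hub; subst.
    by case: (unliftP ord0 w) neq_uw => [k -> _|<-]; [exists k | rewrite eqxx].
  case: (unliftP ord0 u) neq_uw => [k -> _|<-]; last by rewrite eqxx.
  by exists k; rewrite // /star_edge setUC.
case=> k _ ->; exists ord0; apply/existsP; exists (lift ord0 k).
by rewrite /star_adj /star_edge neq_lift !eqxx.
Qed.

Lemma big_edge_set_star (R : Type) (idx : R) (op : Monoid.com_law idx) F :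
  \big[op/idx]_(E in edge_set star) F E = \big[op/idx]_(k < n) F (star_edge k).
Proof. by rewrite edge_set_star big_imset //= => ? ? _ _ /star_edge_inj. Qed.

Lemma size_graph_elems_star : size (graph_elems star) = (2 * n).+1.
Proof.
rewrite /graph_elems size_cat !size_map -enumT size_enum_ord -cardE edge_set_star.
by rewrite card_imset ?card_ord //; [lia | apply: star_edge_inj].
Qed.

Lemma cost_star s : cost star s =
  ((\sum_(k < n) pos s (inr (star_edge k))).*2%:Z
   - (n * pos s (inl ord0) + \sum_(k < n) pos s (inl (lift ord0 k)))%:Z)%R.
Proof.
set p := pos s (inl ord0).
have -> : n * p + \sum_(k < n) pos s (inl (lift ord0 k)) =
          \sum_(k < n) (p + pos s (inl (lift ord0 k))).
  by rewrite big_split sum_nat_const card_ord.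
rewrite /cost big_edge_set_star (big_morph double doubleD (erefl 0.*2)).
rewrite !(big_morph Posz PoszD (erefl (Posz 0))) -sumrB.
by apply: eq_bigr => k _; rewrite big_setU1 ?inE ?neq_lift //= big_set1 -addnn !PoszD; ring.
Qed.

Lemma sum_pos_star s : perm_eq s (graph_elems star) ->
  pos s (inl ord0) + \sum_(k < n) pos s (inl (lift ord0 k))
  + \sum_(k < n) pos s (inr (star_edge k)) = (2 * n).+1 * n.+1.
Proof.
move=> ps; have us : uniq s by rewrite (perm_uniq ps) graph_elems_uniq.
have -> : (2 * n).+1 * n.+1 = \sum_(i < (2 * n).+1) i.+1.
  by apply: double_inj; rewrite double_sum_succ doubleMr doubleS -mul2n.
rewrite -size_graph_elems_star -(perm_size ps) -sum_pos_uniq //.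
rewrite (perm_big _ ps) /graph_elems big_cat !big_map -enumT !big_enum /=.
by rewrite big_edge_set_star big_ord_recl.
Qed.

Lemma cost_star_le s : is_cseq star s ->
  (cost star s <= ((5 * n ^ 2 + n) %/ 2)%N%:Z)%R.
Proof.
move=> [ps _].
have ss : size s = (2 * n).+1 by rewrite (perm_size ps) size_graph_elems_star.
have edge_in_s k : inr (star_edge k) \in s.
  by rewrite (perm_mem ps) mem_cat map_f ?orbT // mem_enum edge_set_star imset_f.
have top_edges : (\sum_(k < n) pos s (inr (star_edge k))).*2 + n * n.+1
                 <= (n * (2 * n).+2).*2.
  rewrite -double_sum_succ -doubleD leq_double.
  have := @sum_uniq_lt_bound (2 * n).+2 [seq pos s (inr (star_edge k)) | k <- enum 'I_n].
  rewrite big_map big_enum size_map size_enum_ord; apply.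
    rewrite map_inj_in_uniq ?enum_uniq // => k1 k2 _ _.
    by move/(pos_inj (edge_in_s k1) (edge_in_s k2)) => [/star_edge_inj].
  by move=> _ /mapP [k _ ->]; rewrite ltnS -ss pos_le_size.
have hub_pos : 0 < pos s (inl ord0) by [].
move: top_edges hub_pos (sum_pos_star ps); rewrite cost_star; nia.
Qed.

Lemma cost_graph_elems_star :
  (cost star (graph_elems star) = ((5 * n ^ 2 + n) %/ 2)%N%:Z)%R.
Proof.
have pos_vertex v : pos (graph_elems star) (inl v) = v.+1.
  by rewrite pos_graph_elems_inl index_enum_ord.
have leaves : (\sum_(k < n) pos (graph_elems star) (inl (lift ord0 k))).*2 = n * n.+3.
  rewrite (eq_bigr (fun k : 'I_n => k.+1 + 1)) => [|k _]; last first.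
    by rewrite pos_vertex lift0 addn1.
  rewrite big_split sum1_card card_ord doubleD double_sum_succ; lia.
move: leaves (sum_pos_star (perm_refl _)); rewrite cost_star pos_vertex /=; nia.
Qed.

End Star.

Theorem theorem2 (n : nat) (hn : (2 <= n)%N) :
  max_cost_is (@star_adj n) (((5 * n ^ 2 + n) %/ 2)%N)%:Z.
Proof.
split; last exact: cost_star_le.
exists (graph_elems (@star_adj n)).
by split; [exact: graph_elems_cseq | exact: cost_graph_elems_star].
Qed.
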